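(* Let $\mathcal A$ be a well-structured abstract domain, and let monotone abstract operators $\llbracket e\rrbracket^\#:\mathcal A\to\mathcal A$ be given for each basic command $e$, extended inductively to all programs as described in the context. (1) If $\llbracket e\rrbracket^\#$ is a sound abstraction of $\llbracket e\rrbracket$ for every basic command $e$, then $\llbracket S\rrbracket^\#$ is a sound abstraction of $\llbracket S\rrbracket$ for every program $S$. (2) If $\llbracket e\rrbracket^\#$ is a complete abstraction of $\llbracket e\rrbracket$ for every basic command $e$, then $\llbracket S\rrbracket^\#$ is a complete abstraction of $\llbracket S\rrbracket$ for every program $S$.
   Context: Fix a finite set $V$ of quantum variables, each a qubit with state space $\mathcal H_q\cong\mathbb C^2$; for $W\subseteq V$, $\mathcal H_W=\bigotimes_{q\in W}\mathcal H_q$. Operators and subspaces on $\mathcal H_W$ are identified with their cylindrical extensions to $\mathcal H_V$, and a subspace is identified with its orthogonal projector; $P^\perp$ is the orthocomplement. $\mathcal D(\mathcal H_V)$ is the set of partial density operators (positive, trace $\le1$). Programs: $S::=\mathbf{skip}\mid \bar q:=|0\rangle\mid \bar q\mathrel{*{=}}U\mid \mathbf{assert}\ P[\bar q]\mid S_0;S_1\mid \mathbf{if}\ P[\bar q]\ \mathbf{then}\ S_1\ \mathbf{else}\ S_0\ \mathbf{end}\mid\mathbf{while}\ P[\bar q]\ \mathbf{do}\ S\ \mathbf{end}$, with $\bar q=q_1,\dots,q_t$ distinct variables, $U$ unitary on $\mathcal H_{\bar q}$, $P$ a subspace of $\mathcal H_{\bar q}$; the first four forms are the basic commands. Semantics $\llbracket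 S\rrbracket:\mathcal D(\mathcal H_V)\to\mathcal D(\mathcal H_V)$: $\llbracket\mathbf{skip}\rrbracket(\rho)=\rho$; $\llbracket\bar q:=|0\rangle\rrbracket(\rho)=\sum_{i=0}^{2^t-1}|0\rangle_{\bar q}\langle i|\rho|i\rangle_{\bar q}\langle0|$; $\llbracket\bar q\mathrel{*{=}}U\rrbracket(\rho)=U\rho U^\dagger$; $\llbracket\mathbf{assert}\ P[\bar q]\rrbracket(\rho)=P\rho P$; $\llbracket S_0;S_1\rrbracket=\llbracket S_1\rrbracket\circ\llbracket S_0\rrbracket$; $\llbracket\mathbf{if}\ P[\bar q]\ \mathbf{then}\ S_1\ \mathbf{else}\ S_0\ \mathbf{end}\rrbracket(\rho)=\llbracket\mathbf{assert}\ P[\bar q];S_1\rrbracket(\rho)+\llbracket\mathbf{assert}\ P^\perp[\bar q];S_0\rrbracket(\rho)$; $\llbracket\mathbf{while}\ P[\bar q]\ \mathbf{do}\ S\ \mathbf{end}\rrbracket(\rho)=\sum_{i\ge0}\llbracket(\mathbf{assert}\ P[\bar q];S)^i;\mathbf{assert}\ P^\perp[\bar q]\rrbracket(\rho)$, where $T^i$ is $i$-fold sequential composition ($T^0=\mathbf{skip}$). The concrete domain is $\mathcal Q=2^{\mathcal D(\mathcal H_V)}$ ordered by inclusion, and $\llbracket S\rrbracket(R)=\{\llbracket S\rrbracket(\rho):\rho\in R\}$. A pair of monotone maps $(\alpha,\gamma)$ between posets is a Galois connection if $c\le\gamma(a)\iff\alpha(c)\le a$, and a Galois embedding if moreover $\alpha\circ\gamma=\mathrm{id}$.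 A complete lattice $(\mathcal A,\le_{\mathcal A},\vee,\wedge,\bot,\top)$ with monotone $\alpha:\mathcal Q\to\mathcal A$, $\gamma:\mathcal A\to\mathcal Q$ is a well-structured abstract domain if (a) $(\alpha,\gamma)$ is a Galois embedding, and (b) for any family $\rho_i\in\mathcal D(\mathcal H_V)$ and reals $x_i>0$ with $\sum_i x_i\rho_i\in\mathcal D(\mathcal H_V)$, $\alpha(\sum_i x_i\rho_i)=\bigvee_i\alpha(\rho_i)$, where $\alpha(\rho)=\alpha(\{\rho\})$. For $f:\mathcal Q\to\mathcal Q$, an operator $f^\#:\mathcal A\to\mathcal A$ is a sound abstraction of $f$ if $\alpha(f(R))\le_{\mathcal A}f^\#(\alpha(R))$ for all $R\in\mathcal Q$, and a complete abstraction if equality holds for all $R$. Given monotone $\llbracket e\rrbracket^\#$ for basic commands $e$, the operators $\llbracket S\rrbracket^\#$ for composite programs are defined inductively: $\llbracket S_0;S_1\rrbracket^\#=\llbracket S_1\rrbracket^\#\circ\llbracket S_0\rrbracket^\#$; $\llbracket\mathbf{if}\ P[\bar q]\ \mathbf{then}\ S_1\ \mathbf{else}\ S_0\ \mathbf{end}\rrbracket^\#(a)=\llbracket\mathbf{assert}\ P[\bar q];S_1\rrbracket^\#(a)\vee\llbracket\mathbf{assert}\ P^\perp[\bar q];S_0\rrbracket^\#(a)$; $\llbracket\mathbf{while}\ P[\bar q]\ \mathbf{do}\ S\ \mathbf{end}\rrbracket^\#(a)=\bigvee_{i\ge0}\llbracket(\mathbf{assert}\ P[\bar q];S)^i;\mathbf{assert}\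 P^\perp[\bar q]\rrbracket^\#(a)$. *)

From mathcomp Require Import all_boot all_order all_algebra.
From mathcomp Require Import all_classical all_reals all_analysis.
From mathcomp Require Import complex.
Import numFieldNormedType.Exports.
Import Order.TTheory GRing.Theory Num.Theory.

Set Implicit Arguments.
Unset Strict Implicit.
Unset Printing Implicit Defensive.

Local Open Scope classical_set_scope.
Local Open Scope ring_scope.
Local Open Scope complex_scope.

(* V is the finite set of qubit variables.  The computational
   basis of H_V is indexed by {ffun V -> bool}; operators on H_V are square
   complex matrices indexed by (enumeration ranks of) such basis states.
   For a list qs = q_1..q_t of variables, H_qs = H_{q_1} (x) ... (x) H_{q_t}
   has basis {ffun 'I_t -> bool} (the k-th bit is the value of q_(k+1)).      *)

Definition gmat (R : realType) (V : finType) := 'M[R[i]]_(#|{ffun V -> bool}|).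
Definition lmat (R : realType) (t : nat) := 'M[R[i]]_(#|{ffun 'I_t -> bool}|).

Definition adjmx (R : realType) (m n : nat) (A : 'M[R[i]]_(m, n)) : 'M[R[i]]_(n, m) :=
  (map_mx (fun z : R[i] => z^*) A)^T.

(* Cylindrical extension of an operator on H_qs to H_V:
   <b| ext U |b'> = [b, b' agree outside qs] * <b|_qs U |b'>_qs *)
Definition ext (R : realType) (V : finType) (t : nat) (qs : t.-tuple V)
  (U : lmat R t) : gmat R V :=
  \matrix_(i, j)
    let b  := (enum_val i : {ffun V -> bool}) in
    let b' := (enum_val j : {ffun V -> bool}) in
    if [forall v, (v \notin qs) ==> (b v == b' v)] then
      U (enum_rank [ffun k : 'I_t => b (tnth qs k)])
        (enum_rank [ffun k : 'I_t => b' (tnth qs k)])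
    else 0.

Definition ket0bra (R : realType) (t : nat) (b : {ffun 'I_t -> bool}) : lmat R t :=
  delta_mx (enum_rank ([ffun=> false] : {ffun 'I_t -> bool})) (enum_rank b).

(* orthocomplement of a subspace given by its projector *)
Definition perp (R : realType) (t : nat) (P : lmat R t) : lmat R t := 1%:M - P.

Definition is_proj (R : realType) (t : nat) (P : lmat R t) : Prop :=
  P *m P = P /\ adjmx P = P.

Definition is_unitary (R : realType) (t : nat) (U : lmat R t) : Prop :=
  U *m adjmx U = 1%:M /\ adjmx U *m U = 1%:M.

Definition is_dens (R : realType) (V : finType) (rho : gmat R V) : Prop :=
  (forall v : 'cV[R[i]]_(#|{ffun V -> bool}|), 0 <= (adjmx v *m rho *m v) 0 0)
  /\ \tr rho <= 1.

Inductive prog (R : realType) (V : finType) : Type :=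
| Skip
| Init (t : nat) (qs : t.-tuple V)
| Apply (t : nat) (qs : t.-tuple V) (U : lmat R t)
| Assert (t : nat) (qs : t.-tuple V) (P : lmat R t)
| Seq (S0 S1 : prog R V)
| If (t : nat) (qs : t.-tuple V) (P : lmat R t) (S1 S0 : prog R V)
| While (t : nat) (qs : t.-tuple V) (P : lmat R t) (B : prog R V).

Arguments Skip {R V}.
Arguments Init {R V t}.
Arguments Apply {R V t}.
Arguments Assert {R V t}.
Arguments Seq {R V}.
Arguments If {R V t}.
Arguments While {R V t}.

Fixpoint wf_prog (R : realType) (V : finType) (Sp : prog R V) : Prop :=
  match Sp with
  | Skip => True
  | Init t qs => (0 < t)%N /\ uniq qs
  | Apply t qs U => (0 < t)%N /\ uniq qs /\ is_unitary U
  | Assert t qs P => (0 < t)%N /\ uniq qs /\ is_proj P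
  | Seq S0 S1 => wf_prog S0 /\ wf_prog S1
  | If t qs P S1 S0 => (0 < t)%N /\ uniq qs /\ is_proj P /\ wf_prog S1 /\ wf_prog S0
  | While t qs P B => (0 < t)%N /\ uniq qs /\ is_proj P /\ wf_prog B
  end.

Definition is_basic (R : realType) (V : finType) (Sp : prog R V) : Prop :=
  match Sp with
  | Skip | Init _ _ | Apply _ _ _ | Assert _ _ _ => True
  | _ => False
  end.

Definition mx_cvg (R : realType) (m n : nat) (u : nat -> 'M[R[i]]_(m, n))
  (l : 'M[R[i]]_(m, n)) : Prop :=
  forall i j,
    ((fun k => complex.Re (u k i j)) @ \oo --> complex.Re (l i j)) /\
    ((fun k => complex.Im (u k i j)) @ \oo --> complex.Im (l i j)).

Definition mx_lim (R : realType) (m n : nat) (u : nat -> 'M[R[i]]_(m, n))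
  : 'M[R[i]]_(m, n) :=
  \matrix_(i, j) ((lim ((fun k => complex.Re (u k i j)) @ \oo)) +i*
                  (lim ((fun k => complex.Im (u k i j)) @ \oo))).

Definition sem_assert (R : realType) (V : finType) (t : nat) (qs : t.-tuple V)
  (P : lmat R t) (rho : gmat R V) : gmat R V :=
  ext qs P *m rho *m ext qs P.

Fixpoint sem (R : realType) (V : finType) (Sp : prog R V) : gmat R V -> gmat R V :=
  match Sp with
  | Skip => fun rho => rho
  | Init t qs => fun rho =>
      \sum_(b : {ffun 'I_t -> bool})
        ext qs (ket0bra R b) *m rho *m adjmx (ext qs (ket0bra R b))
  | Apply t qs U => fun rho => ext qs U *m rho *m adjmx (ext qs U)
  | Assert t qs P => sem_assert qs P
  | Seq S0 S1 => fun rho => sem S1 (sem S0 rho)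
  | If t qs P S1 S0 => fun rho =>
      sem S1 (sem_assert qs P rho) + sem S0 (sem_assert qs (perp P) rho)
  | While t qs P B => fun rho =>
      (* sum_{i>=0} [[ (assert P; S)^i ; assert P^perp ]] (rho) *)
      mx_lim (fun n => \sum_(i < n)
                sem_assert qs (perp P)
                  (iter i (fun r => sem B (sem_assert qs P r)) rho))
  end.

Definition is_complete_lattice (A : Type) (le : A -> A -> Prop) (sup : set A -> A)
  : Prop :=
  (forall a, le a a) /\
  (forall a b c, le a b -> le b c -> le a c) /\
  (forall a b, le a b -> le b a -> a = b) /\
  (forall (X : set A) a, X a -> le a (sup X)) /\
  (forall (X : set A) b, (forall a, X a -> le a b) -> le (sup X) b).

(* The concrete domain Q = 2^{D(H_V)} is represented by the sets of matrices
   contained in is_dens. *)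
Definition well_structured (R : realType) (V : finType) (A : Type)
  (le : A -> A -> Prop) (sup : set A -> A)
  (alpha : set (gmat R V) -> A) (gamma : A -> set (gmat R V)) : Prop :=
  is_complete_lattice le sup /\
  (forall c1 c2 : set (gmat R V), c2 `<=` @is_dens R V -> c1 `<=` c2 ->
     le (alpha c1) (alpha c2)) /\
  (forall a : A, gamma a `<=` @is_dens R V) /\
  (forall a1 a2 : A, le a1 a2 -> gamma a1 `<=` gamma a2) /\
  (forall (c : set (gmat R V)) (a : A), c `<=` @is_dens R V ->
     (c `<=` gamma a <-> le (alpha c) a)) /\
  (forall a : A, alpha (gamma a) = a) /\
  (forall (I : finType) (rho : I -> gmat R V) (x : I -> R),
     (0 < #|I|)%N ->
     (forall i, is_dens (rho i)) -> (forall i, 0 < x i) ->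
     is_dens (\sum_(i : I) (x i)%:C *: rho i) ->
     alpha [set \sum_(i : I) (x i)%:C *: rho i] =
       sup (range (fun i => alpha [set rho i]))) /\
  (forall (rho : nat -> gmat R V) (x : nat -> R) (sigma : gmat R V),
     (forall i, is_dens (rho i)) -> (forall i, 0 < x i) ->
     mx_cvg (fun n => \sum_(i < n) (x i)%:C *: rho i) sigma ->
     is_dens sigma ->
     alpha [set sigma] = sup (range (fun i => alpha [set rho i]))).

(* abstract semantics of T^i, given that of skip (sk) and of T (f):
   T^0 = skip, T^1 = T, T^(n+2) = T^(n+1); T *)
Fixpoint apow (A : Type) (sk f : A -> A) (n : nat) : A -> A :=
  match n with
  | 0 => sk
  | m.+1 => match m with
            | 0 => f
            | _ => fun a => f (apow sk f m a)
            end
  end.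

Fixpoint asem (R : realType) (V : finType) (A : Type) (sup : set A -> A)
  (absb : prog R V -> A -> A) (Sp : prog R V) : A -> A :=
  match Sp with
  | Skip => absb Sp
  | Init _ _ => absb Sp
  | Apply _ _ _ => absb Sp
  | Assert _ _ _ => absb Sp
  | Seq S0 S1 => fun a => asem sup absb S1 (asem sup absb S0 a)
  | If t qs P S1 S0 => fun a =>
      sup [set asem sup absb S1 (absb (Assert qs P) a);
               asem sup absb S0 (absb (Assert qs (perp P)) a)]
  | While t qs P B => fun a =>
      sup (range (fun i : nat =>
        absb (Assert qs (perp P))
          (apow (absb Skip) (fun b => asem sup absb B (absb (Assert qs P) b)) i a)))
  end.

Definition monotone_op (A : Type) (le : A -> A -> Prop) (f : A -> A) : Prop :=
  forall a b, le a b -> le (f a) (f b).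

Definition sound_abs (R : realType) (V : finType) (A : Type) (le : A -> A -> Prop)
  (alpha : set (gmat R V) -> A) (f : gmat R V -> gmat R V) (fs : A -> A) : Prop :=
  forall c : set (gmat R V), c `<=` @is_dens R V -> le (alpha (f @` c)) (fs (alpha c)).

Definition complete_abs (R : realType) (V : finType) (A : Type)
  (alpha : set (gmat R V) -> A) (f : gmat R V -> gmat R V) (fs : A -> A) : Prop :=
  forall c : set (gmat R V), c `<=` @is_dens R V -> alpha (f @` c) = fs (alpha c).

(* Soundness and completeness are the same statement
   [r (alpha ([[S]] @` c)) ([[S]]# (alpha c))] for [r] = [le] resp. [eq], proved
   by structural induction on [S].  Sequencing composes the two abstractions.
   For [if] and [while], condition (b) of well-structuredness turns the abstraction
   of a sum of density operators into the join of the abstractions of the summands,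
   so the abstract join over branches (resp. loop unrollings) matches the concrete
   sum term by term.  Using the Galois connection on the intermediate sets requires
   that the concrete semantics maps partial density operators to partial density
   operators; for [while] the partial sums of the unrollings are positive
   semidefinite with trace at most [tr rho], so their quadratic forms increase to a
   limit, and by polarization every entry converges: the loop semantics is the limit
   required by condition (b) for countable families. *)

From HB Require Import structures.
From mathcomp Require Import all_boot all_order all_algebra.
From mathcomp Require Import all_classical all_reals all_analysis.
From mathcomp Require Import complex.
From mathcomp Require Import ring.
Import numFieldNormedType.Exports.
Import Order.TTheory GRing.Theory Num.Theory.

Set Implicit Arguments.
Unset Strict Implicit.
Unset Printing Implicit Defensive.

Local Open Scope classical_set_scope.
Local Open Scope ring_scope.
Local Open Scope complex_scope.

(* the components of [complex], not the generic ['Re] and ['Im] of [Num] *)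
Local Notation Re := complex.Re.
Local Notation Im := complex.Im.

Section Adjoint.
Variable R : realType.
Local Notation C := R[i].

Lemma adjmxE m n (A : 'M[C]_(m, n)) i j : adjmx A i j = (A j i)^*.
Proof. by rewrite !mxE. Qed.

Lemma adjmx_is_zmod_morphism m n : zmod_morphism (@adjmx R m n).
Proof. by move=> A B; rewrite /adjmx raddfB /= linearB. Qed.

HB.instance Definition _ m n :=
  GRing.isZmodMorphism.Build _ _ (@adjmx R m n) (@adjmx_is_zmod_morphism m n).

Lemma adjmxK m n (A : 'M[C]_(m, n)) : adjmx (adjmx A) = A.
Proof. by apply/matrixP => i j; rewrite !adjmxE conjcK. Qed.

Lemma adjmxZ m n c (A : 'M[C]_(m, n)) : adjmx (c *: A) = c^* *: adjmx A.
Proof. by apply/matrixP => i j; rewrite !mxE rmorphM. Qed.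

Lemma adjmxM m n p (A : 'M[C]_(m, n)) (B : 'M[C]_(n, p)) :
  adjmx (A *m B) = adjmx B *m adjmx A.
Proof. by rewrite /adjmx map_mxM trmx_mul. Qed.

Lemma adjmx1 n : adjmx (1%:M : 'M[C]_n) = 1%:M.
Proof. by rewrite /adjmx map_scalar_mx rmorph1 tr_scalar_mx. Qed.

Lemma adjmx_delta m n (i : 'I_m) (j : 'I_n) :
  adjmx (delta_mx i j : 'M[C]_(m, n)) = delta_mx j i.
Proof. by apply/matrixP => a b; rewrite !mxE conjc_nat andbC. Qed.

End Adjoint.

Section CylindricalExtension.
Variables (R : realType) (V : finType) (t : nat) (qs : t.-tuple V).
Local Notation C := R[i].
Local Notation state := {ffun V -> bool}.
Local Notation lstate := {ffun 'I_t -> bool}.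

Definition agree_off (b b' : state) := [forall v, (v \notin qs) ==> (b v == b' v)].
Definition restrict (b : state) : lstate := [ffun k => b (tnth qs k)].

Lemma extE (U : lmat R t) i j :
  ext qs U i j = if agree_off (enum_val i) (enum_val j) then
    U (enum_rank (restrict (enum_val i))) (enum_rank (restrict (enum_val j)))
  else 0.
Proof. by rewrite mxE. Qed.

Lemma agree_off_refl b : agree_off b b.
Proof. by apply/forall_inP. Qed.

Lemma agree_off_sym b b' : agree_off b b' = agree_off b' b.
Proof. by apply/forall_inP/forall_inP => H v /H /eqP ->. Qed.

Lemma agree_off_trans b1 b2 b3 : agree_off b1 b2 -> agree_off b2 b3 -> agree_off b1 b3.
Proof.
move=> /forall_inP H12 /forall_inP H23; apply/forall_inP => v vq.
by rewrite (eqP (H12 v vq)) H23.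
Qed.

Lemma agree_off_restrictP b b' :
  reflect (b = b') (agree_off b b' && (restrict b == restrict b')).
Proof.
apply: (iffP andP) => [[/forall_inP Hoff /eqP Hin] | <-]; last by rewrite agree_off_refl.
apply/ffunP => v; have [/tnthP[k ->] | vq] := boolP (v \in qs); last exact/eqP/Hoff.
by move/ffunP: Hin => /(_ k); rewrite !ffunE.
Qed.

Lemma ext_is_zmod_morphism : zmod_morphism (@ext R V t qs).
Proof.
move=> A B; apply/matrixP => i j.
by rewrite /ext !mxE; case: ifP; rewrite ?subr0.
Qed.

HB.instance Definition _ :=
  GRing.isZmodMorphism.Build _ _ (@ext R V t qs) ext_is_zmod_morphism.

Lemma ext_adj (A : lmat R t) : adjmx (ext qs A) = ext qs (adjmx A).
Proof.
apply/matrixP => i j; rewrite adjmxE !extE adjmxE agree_off_sym.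
by case: ifP; rewrite ?conjc0.
Qed.

Lemma ext1 : ext qs (1%:M : lmat R t) = 1%:M.
Proof.
apply/matrixP => i j; rewrite extE !mxE (inj_eq enum_rank_inj) -(inj_eq enum_val_inj).
by rewrite (sameP eqP (agree_off_restrictP _ _)); case: agree_off.
Qed.

Hypothesis qs_uniq : uniq qs.

Definition override (b : state) (c : lstate) : state :=
  [ffun v => if [pick k | tnth qs k == v] is Some k then c k else b v].

Lemma restrict_override b c : restrict (override b c) = c.
Proof.
apply/ffunP => k; rewrite !ffunE; case: pickP => [k' /eqP Hk | /(_ k)]; last by rewrite eqxx.
by move/tuple_uniqP: qs_uniq => /(_ k' k Hk) ->.
Qed.

Lemma agree_off_override b c : agree_off b (override b c).
Proof.
apply/forall_inP => v vq; rewrite ffunE; case: pickP => [k /eqP Hk | //].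
by move: vq; rewrite -Hk mem_tnth.
Qed.

Lemma override_restrict b b' : agree_off b b' -> override b (restrict b') = b'.
Proof.
move=> Hoff; apply/agree_off_restrictP.
rewrite restrict_override eqxx andbT (agree_off_trans _ Hoff) //.
by rewrite agree_off_sym agree_off_override.
Qed.

Lemma sum_agree_off b (F : lstate -> C) :
  \sum_(b' | agree_off b b') F (restrict b') = \sum_c F c.
Proof.
rewrite (reindex (override b)) /=.
  by apply: eq_big => c; rewrite ?agree_off_override ?restrict_override.
by exists restrict => b'; rewrite inE => Hb'; rewrite ?restrict_override ?override_restrict.
Qed.

Lemma ext_mul (A B : lmat R t) : ext qs (A *m B) = ext qs A *m ext qs B.
Proof.
apply/matrixP => i j; rewrite extE [RHS]mxE.
rewrite (reindex (@enum_rank state)) /=; last by apply: onW_bij; exact: enum_rank_bij.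
under eq_bigr => b _ do rewrite !extE !enum_rankK.
have [Hij | Hij] := boolP (agree_off (enum_val i) (enum_val j)); last first.
  rewrite big1 // => b _; case: ifP => Hib; case: ifP => Hbj; rewrite ?mul0r ?mulr0 //.
  by case/negP: Hij; apply: agree_off_trans Hib Hbj.
rewrite (bigID (agree_off (enum_val i))) /= [X in _ + X]big1 ?addr0 => [|b /negbTE->];
  last by rewrite mul0r.
set pi := enum_rank (restrict (enum_val i)); set pj := enum_rank (restrict (enum_val j)).
rewrite (eq_bigr (fun b => A pi (enum_rank (restrict b)) * B (enum_rank (restrict b)) pj));
  last first.
  by move=> b Hib; rewrite Hib (agree_off_trans _ Hij) // agree_off_sym.
rewrite (sum_agree_off _ (fun c => A pi (enum_rank c) * B (enum_rank c) pj)) mxE.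
by rewrite (reindex (@enum_rank lstate)) //=; apply: onW_bij; exact: enum_rank_bij.
Qed.

End CylindricalExtension.

Section ComplexConvergence.
Variable R : realType.
Local Notation C := R[i].

Definition cvgC (u : nat -> C) (l : C) : Prop :=
  (fun k => Re (u k)) @ \oo --> Re l /\ (fun k => Im (u k)) @ \oo --> Im l.

Let Re_add (x y : C) : Re (x + y) = Re x + Re y. Proof. by case: x y => ? ? [? ?]. Qed.
Let Im_add (x y : C) : Im (x + y) = Im x + Im y. Proof. by case: x y => ? ? [? ?]. Qed.
Let Re_mul (x y : C) : Re (x * y) = Re x * Re y - Im x * Im y.
Proof. by case: x y => ? ? [? ?]. Qed.
Let Im_mul (x y : C) : Im (x * y) = Re x * Im y + Im x * Re y.
Proof. by case: x y => ? ? [? ?] /=; rewrite addrC. Qed.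

Lemma cvgC_cst (a : C) : cvgC (fun=> a) a.
Proof. by split; apply: cvg_cst. Qed.

Lemma cvgCD u w a b : cvgC u a -> cvgC w b -> cvgC (fun k => u k + w k) (a + b).
Proof.
move=> [Hu1 Hu2] [Hw1 Hw2]; split.
  by under eq_fun do rewrite Re_add; rewrite Re_add; apply: cvgD.
by under eq_fun do rewrite Im_add; rewrite Im_add; apply: cvgD.
Qed.

Lemma cvgCMl c u a : cvgC u a -> cvgC (fun k => c * u k) (c * a).
Proof.
move=> [H1 H2]; split.
  by under eq_fun do rewrite Re_mul; rewrite Re_mul; apply: cvgB; apply: cvgMl_tmp.
by under eq_fun do rewrite Im_mul; rewrite Im_mul; apply: cvgD; apply: cvgMl_tmp.
Qed.

Lemma cvgCMr c u a : cvgC u a -> cvgC (fun k => u k * c) (a * c).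
Proof. by move=> /(cvgCMl c); rewrite mulrC; under eq_fun do rewrite mulrC. Qed.

Lemma cvgC_sum (I : Type) (r : seq I) (u : I -> nat -> C) (l : I -> C) :
  (forall i, cvgC (u i) (l i)) -> cvgC (fun k => \sum_(i <- r) u i k) (\sum_(i <- r) l i).
Proof.
move=> H; elim: r => [|x r IH].
  by rewrite big_nil; under eq_fun do rewrite big_nil; exact: cvgC_cst.
by rewrite big_cons; under eq_fun do rewrite big_cons; exact: cvgCD.
Qed.

Lemma cvgC_ge0 u a : cvgC u a -> (forall k, 0 <= u k) -> 0 <= a.
Proof.
move=> [HRe HIm] u_ge0; rewrite lecE; apply/andP; split.
  have Im0 : (fun k => Im (u k)) = fun=> 0.
    by apply/funext => k; move: (u_ge0 k); rewrite lecE => /andP[/eqP].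
  by rewrite Im0 in HIm; rewrite (cvg_unique _ HIm (cvg_cst 0)).
by apply: (cvgr_to_ge HRe); apply: nearW => k; move: (u_ge0 k); rewrite lecE => /andP[].
Qed.

Lemma cvgCB u w a b : cvgC u a -> cvgC w b -> cvgC (fun k => u k - w k) (a - b).
Proof.
move=> Hu /(cvgCMl (-1)); rewrite mulN1r; under eq_fun do rewrite mulN1r.
exact: cvgCD.
Qed.

Lemma cvgC_le u a c : cvgC u a -> (forall k, u k <= c) -> a <= c.
Proof.
move=> Hu u_le; rewrite -subr_ge0; apply: cvgC_ge0 (cvgCB (cvgC_cst c) Hu) _ => k.
by rewrite subr_ge0.
Qed.

Lemma cvgC_nondecreasing u B :
  (forall k, u k <= u k.+1) -> (forall k, u k <= B) -> exists l, cvgC u l.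
Proof.
move=> u_nd u_le; have Im_cst k : Im (u k) = Im (u 0).
  by elim: k => // k <-; move: (u_nd k); rewrite lecE => /andP[/eqP].
have Re_cvg : cvgn (fun k => Re (u k)).
  apply: nondecreasing_is_cvgn.
    by apply/nondecreasing_seqP => k; move: (u_nd k); rewrite lecE => /andP[].
  by exists (Re B) => _ [k _ <-]; move: (u_le k); rewrite lecE => /andP[].
exists (limn (fun k => Re (u k)) +i* Im (u 0)); split => //=.
by under eq_fun do rewrite Im_cst; exact: cvg_cst.
Qed.

Lemma cvgC_lim u l :
  cvgC u l -> lim ((fun k => Re (u k)) @ \oo) +i* lim ((fun k => Im (u k)) @ \oo) = l.
Proof. by case=> /cvg_lim -> // /cvg_lim -> //; case: l. Qed.

End ComplexConvergence.

Section PositiveSemidefinite.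
Variables (R : realType) (n : nat).
Local Notation C := R[i].
Implicit Types (M : 'M[C]_n) (x y v : 'cV[C]_n).

Definition sesq M x y : C := (adjmx x *m M *m y) 0 0.
Definition psd M := forall v, 0 <= sesq M v v.

Lemma sesqE M x y : sesq M x y = \sum_j (\sum_i (x i 0)^* * M i j) * y j 0.
Proof.
by rewrite /sesq mxE; apply: eq_bigr => j _; rewrite mxE; under eq_bigr do rewrite adjmxE.
Qed.

Lemma sesq_sum (I : Type) (r : seq I) (P : pred I) (F : I -> 'M[C]_n) x y :
  sesq (\sum_(i <- r | P i) F i) x y = \sum_(i <- r | P i) sesq (F i) x y.
Proof. by rewrite /sesq mulmx_sumr mulmx_suml summxE. Qed.

Lemma sesq_delta M a b : sesq M (delta_mx a 0) (delta_mx b 0) = M a b.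
Proof. by rewrite /sesq adjmx_delta -rowE -colE !mxE. Qed.

Lemma sesq_expand M x y c : sesq M (x + c *: y) (x + c *: y) =
  sesq M x x + c * sesq M x y + conjc c * sesq M y x + conjc c * c * sesq M y y.
Proof.
rewrite /sesq [adjmx _]raddfD /= adjmxZ !mulmxDl !mulmxDr -!scalemxAl -!scalemxAr !mxE.
by rewrite mulrA; ring.
Qed.

Lemma psdD (A B : 'M[C]_n) : psd A -> psd B -> psd (A + B).
Proof.
move=> A_psd B_psd v; rewrite /sesq mulmxDr mulmxDl mxE.
by apply: addr_ge0; [exact: A_psd | exact: B_psd].
Qed.

Lemma psd_sum (I : Type) (r : seq I) (P : pred I) (F : I -> 'M[C]_n) :
  (forall i, P i -> psd (F i)) -> psd (\sum_(i <- r | P i) F i).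
Proof. by move=> F_psd v; rewrite sesq_sum sumr_ge0 // => i /F_psd. Qed.

Lemma psd_conj (M X : 'M[C]_n) : psd X -> psd (M *m X *m adjmx M).
Proof. by move=> X_psd v; have := X_psd (adjmx M *m v); rewrite /sesq adjmxM adjmxK !mulmxA. Qed.

Lemma psd_diag_ge0 M a : psd M -> 0 <= M a a.
Proof. by move=> M_psd; rewrite -sesq_delta. Qed.

Lemma psd_mxtrace_ge0 M : psd M -> 0 <= \tr M.
Proof. by move=> M_psd; apply: sumr_ge0 => a _; apply: psd_diag_ge0. Qed.

Lemma psd_diag_le_mxtrace M a : psd M -> M a a <= \tr M.
Proof.
by move=> M_psd; rewrite /mxtrace (bigD1 a) //= lerDl sumr_ge0 // => b _; apply: psd_diag_ge0.
Qed.

(* parallelogram law for the pair x + c y, x - c y *)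
Lemma psd_sesq_le M x y c : psd M -> conjc c * c = 1 ->
  sesq M (x + c *: y) (x + c *: y) <= 2 * sesq M x x + 2 * sesq M y y.
Proof.
move=> M_psd c_unit; rewrite -subr_ge0.
suff -> : 2 * sesq M x x + 2 * sesq M y y - sesq M (x + c *: y) (x + c *: y) =
          sesq M (x + (- c) *: y) (x + (- c) *: y) by [].
by rewrite !sesq_expand rmorphN mulrNN c_unit; ring.
Qed.

Lemma polarization M a b (q := fun v => sesq M v v) (ea := delta_mx a 0) (eb := delta_mx b 0) :
  M a b = 2^-1 * ((q (ea + 1 *: eb) - q ea - q eb) - 'i%C * (q (ea + 'i%C *: eb) - q ea - q eb)).
Proof.
have conj_i : conjc ('i%C : C) = - 'i%C.
  by apply/eqP; rewrite eq_complex /=; apply/andP; split; apply/eqP; ring.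
have i2 : ('i%C : C) * 'i%C = -1.
  by apply/eqP; rewrite eq_complex /=; apply/andP; split; apply/eqP; ring.
rewrite /q !sesq_expand conj_i rmorph1 !sesq_delta.
(* the error term is a multiple of ['i * 'i + 1] *)
rewrite [RHS](_ : _ = M a b + 2^-1 * ('i%C * 'i%C + 1) * (M b a - M a b + 'i%C * M b b)).
  by rewrite i2 addNr mulr0 mul0r addr0.
by field.
Qed.

End PositiveSemidefinite.

Section PsdSeries.
Variables (R : realType) (n : nat) (d : nat -> 'M[R[i]]_n) (c0 : R[i]).
Hypothesis d_psd : forall k, psd (d k).
Hypothesis mxtrace_partial_le : forall k, \tr (\sum_(i < k) d i) <= c0.
Local Notation s k := (\sum_(i < k) d i).

Lemma psd_partial k : psd (s k).
Proof. exact: psd_sum. Qed.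

Lemma sesq_partial_cvg v B :
  (forall k, sesq (s k) v v <= B) -> exists l, cvgC (fun k => sesq (s k) v v) l.
Proof.
move=> sesq_le; apply: cvgC_nondecreasing sesq_le => k.
by rewrite !sesq_sum big_ord_recr /= lerDl d_psd.
Qed.

Lemma sesq_partial_delta_le k a : sesq (s k) (delta_mx a 0) (delta_mx a 0) <= c0.
Proof. by rewrite sesq_delta (le_trans (psd_diag_le_mxtrace _ (psd_partial k))). Qed.

Lemma partial_entry_cvg a b : exists l, cvgC (fun k => s k a b) l.
Proof.
pose ea : 'cV[R[i]]_n := delta_mx a 0; pose eb : 'cV[R[i]]_n := delta_mx b 0.
(* by polarization, [s k a b] combines four nondecreasing bounded quadratic forms *)
have sesq_cvg c : conjc c * c = 1 ->
    exists l, cvgC (fun k => sesq (s k) (ea + c *: eb) (ea + c *: eb)) l.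
  move=> c_unit; apply: (sesq_partial_cvg (B := 4 * c0)) => k.
  apply: le_trans (psd_sesq_le _ _ (psd_partial k) c_unit) _.
  rewrite (_ : 4 * c0 = 2 * c0 + 2 * c0); last by ring.
  by rewrite lerD // ler_wpM2l // sesq_partial_delta_le.
have [la Ha] := sesq_partial_cvg (sesq_partial_delta_le ^~ a).
have [lb Hb] := sesq_partial_cvg (sesq_partial_delta_le ^~ b).
have unit1 : conjc 1 * 1 = 1 :> R[i] by rewrite rmorph1 mulr1.
have unit_i : conjc 'i%C * 'i%C = 1 :> R[i].
  by apply/eqP; rewrite eq_complex /=; apply/andP; split; apply/eqP; ring.
have [l1 H1] := sesq_cvg 1 unit1; have [li Hi] := sesq_cvg 'i%C unit_i.
eexists; under eq_fun do rewrite polarization.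
exact: cvgCMl _ (cvgCB (cvgCB (cvgCB H1 Ha) Hb) (cvgCMl _ (cvgCB (cvgCB Hi Ha) Hb))).
Qed.

Lemma psd_series_cvg (L := mx_lim (fun k => s k)) :
  mx_cvg (fun k => s k) L /\ psd L /\ \tr L <= c0.
Proof.
have L_cvg : mx_cvg (fun k => s k) L.
  by move=> i j; have [l Hl] := partial_entry_cvg i j; rewrite /L mxE (cvgC_lim Hl).
split=> //; split.
  move=> v; apply: (@cvgC_ge0 _ (fun k => sesq (s k) v v)); last by move=> k; apply: psd_partial.
  under eq_fun do rewrite sesqE; rewrite sesqE.
  by apply: cvgC_sum => j; apply: cvgCMr; apply: cvgC_sum => i; apply: cvgCMl.
apply: (cvgC_le (u := fun k => \tr (s k))) mxtrace_partial_le.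
by rewrite /mxtrace; apply: cvgC_sum => i; exact: L_cvg.
Qed.

End PsdSeries.

Section ConcreteSemantics.
Variables (R : realType) (V : finType).
Local Notation gmat := (gmat R V).

Lemma is_proj_perp t (P : lmat R t) : is_proj P -> is_proj (perp P).
Proof.
move=> [P_idem P_adj]; split; rewrite /perp.
  by rewrite mulmxBl mul1mx mulmxBr mulmx1 P_idem subrr subr0.
by rewrite [adjmx _]raddfB /= adjmx1 P_adj.
Qed.

Lemma ext_perp t (qs : t.-tuple V) (P : lmat R t) : ext qs (perp P) = 1%:M - ext qs P.
Proof. by rewrite /perp raddfB /= ext1. Qed.

Lemma psd_assert t (qs : t.-tuple V) (P : lmat R t) (X : gmat) :
  is_proj P -> psd X -> psd (sem_assert qs P X).
Proof. by move=> P_proj /(psd_conj (ext qs P)); rewrite ext_adj P_proj.2. Qed.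

Lemma mxtrace_assert t (qs : t.-tuple V) (P : lmat R t) (X : gmat) :
  uniq qs -> is_proj P -> \tr (sem_assert qs P X) = \tr (ext qs P *m X).
Proof. by move=> qs_uniq P_proj; rewrite mxtrace_mulC mulmxA -ext_mul // P_proj.1. Qed.

Lemma mxtrace_assert_split t (qs : t.-tuple V) (P : lmat R t) (X : gmat) :
  uniq qs -> is_proj P -> \tr (sem_assert qs P X) + \tr (sem_assert qs (perp P) X) = \tr X.
Proof.
move=> qs_uniq P_proj; rewrite !mxtrace_assert //; last exact: is_proj_perp.
by rewrite ext_perp mulmxBl mul1mx -mxtraceD addrC subrK.
Qed.

Definition trace_nonincreasing_positive (f : gmat -> gmat) :=
  forall X, psd X -> psd (f X) /\ \tr (f X) <= \tr X.

Lemma init_kraus_complete t (qs : t.-tuple V) : uniq qs ->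
  \sum_(b : {ffun 'I_t -> bool}) adjmx (ext qs (ket0bra R b)) *m ext qs (ket0bra R b) = 1%:M.
Proof.
move=> qs_uniq; under eq_bigr => b _ do rewrite ext_adj -ext_mul // adjmx_delta mul_delta_mx.
rewrite -raddf_sum -(ext1 R qs) mx1_sum_delta (reindex (@enum_rank {ffun 'I_t -> bool})) //.
by apply: onW_bij; exact: enum_rank_bij.
Qed.

Section Loop.
Variables (t : nat) (qs : t.-tuple V) (P : lmat R t) (B : prog R V).
Hypotheses (qs_uniq : uniq qs) (P_proj : is_proj P).
Hypothesis B_tnp : trace_nonincreasing_positive (sem B).
Let body X := sem B (sem_assert qs P X).
Let exit_at X i := sem_assert qs (perp P) (iter i body X).

Lemma psd_iter_body X k : psd X -> psd (iter k body X).
Proof. by move=> X_psd; elim: k => //= k IH; apply: (B_tnp _).1; apply: psd_assert. Qed.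

Lemma psd_exit_at X i : psd X -> psd (exit_at X i).
Proof. by move=> X_psd; apply: psd_assert (is_proj_perp P_proj) (psd_iter_body _ X_psd). Qed.

(* the trace of X is shared between the runs that have exited and the one still looping *)
Lemma mxtrace_loop_le X k : psd X ->
  \tr (\sum_(i < k) exit_at X i) + \tr (iter k body X) <= \tr X.
Proof.
move=> X_psd; elim: k => [|k IH]; first by rewrite big_ord0 mxtrace0 add0r.
rewrite big_ord_recr mxtraceD /= -addrA; apply: le_trans IH; rewrite lerD2l.
set Y := iter k body X.
rewrite -(mxtrace_assert_split Y qs_uniq P_proj) addrC lerD2r.
exact: (B_tnp (psd_assert qs P_proj (psd_iter_body k X_psd))).2.
Qed.

Lemma sem_while_cvg X : psd X ->
  mx_cvg (fun k => \sum_(i < k) exit_at X i) (sem (While qs P B) X) /\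
  psd (sem (While qs P B) X) /\ \tr (sem (While qs P B) X) <= \tr X.
Proof.
move=> X_psd; apply: psd_series_cvg => [i|k]; first exact: psd_exit_at.
apply: le_trans (mxtrace_loop_le k X_psd); rewrite lerDl.
exact/psd_mxtrace_ge0/psd_iter_body.
Qed.

End Loop.

Lemma sem_trace_nonincreasing_positive (S : prog R V) :
  wf_prog S -> trace_nonincreasing_positive (sem S).
Proof.
elim: S => [|t qs|t qs U|t qs P|S0 IH0 S1 IH1|t qs P S1 IH1 S0 IH0|t qs P B IHB] /=.
- by move=> _ X.
- move=> [_ qs_uniq] X X_psd; split; first by apply: psd_sum => b _; apply: psd_conj.
  rewrite raddf_sum /=; under eq_bigr do rewrite mxtrace_mulC mulmxA.
  by rewrite -raddf_sum -mulmx_suml init_kraus_complete // mul1mx.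
- move=> [_ [qs_uniq [_ U_unit]]] X X_psd; split; first exact: psd_conj.
  by rewrite mxtrace_mulC mulmxA ext_adj -ext_mul // U_unit ext1 mul1mx.
- move=> [_ [qs_uniq P_proj]] X X_psd; split; first exact: psd_assert.
  rewrite -(mxtrace_assert_split X qs_uniq P_proj) lerDl.
  exact/psd_mxtrace_ge0/psd_assert/X_psd/is_proj_perp.
- move=> [W0 W1] X X_psd; have [Y_psd trY] := IH0 W0 X X_psd.
  by have [? ?] := IH1 W1 _ Y_psd; split=> //; apply: le_trans trY.
- move=> [_ [qs_uniq [P_proj [W1 W0]]]] X X_psd.
  have [psd1 tr1] := IH1 W1 _ (psd_assert qs P_proj X_psd).
  have [psd0 tr0] := IH0 W0 _ (psd_assert qs (is_proj_perp P_proj) X_psd).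
  split; first exact: psdD.
  by rewrite mxtraceD -(mxtrace_assert_split X qs_uniq P_proj) lerD.
- move=> [_ [qs_uniq [P_proj WB]]] X X_psd.
  by have [_ ?] := sem_while_cvg qs_uniq P_proj (IHB WB) X_psd.
Qed.

Lemma is_dens_sem (S : prog R V) X : wf_prog S -> is_dens X -> is_dens (sem S X).
Proof.
move=> W [X_psd trX]; have [? ?] := sem_trace_nonincreasing_positive W X_psd.
by split=> //; apply: le_trans trX.
Qed.

End ConcreteSemantics.

(* the program [S^n] of the loop semantics, built so that [asem] unfolds it like [apow] *)
Fixpoint prog_pow (R : realType) (V : finType) (S : prog R V) (n : nat) : prog R V :=
  match n with
  | 0 => Skip
  | m.+1 => match m with 0 => S | _ => Seq (prog_pow S m) S end
  end.

Lemma sem_prog_pow (R : realType) (V : finType) (S : prog R V) n X :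
  sem (prog_pow S n) X = iter n (sem S) X.
Proof. by elim: n => [|[|n] IH] //=; rewrite IH. Qed.

Lemma asem_prog_pow (R : realType) (V : finType) A (sup : set A -> A) absb (S : prog R V) n :
  asem sup absb (prog_pow S n) = apow (absb Skip) (asem sup absb S) n.
Proof. by elim: n => [|[|n] IH] //=; rewrite IH. Qed.

Lemma wf_prog_pow (R : realType) (V : finType) (S : prog R V) n :
  wf_prog S -> wf_prog (prog_pow S n).
Proof. by move=> W; elim: n => [|[|n] IH] //=. Qed.

Definition if_branch (R : realType) (V : finType) t (qs : t.-tuple V) (P : lmat R t)
    (S1 S0 : prog R V) (b : bool) : prog R V :=
  if b then Seq (Assert qs P) S1 else Seq (Assert qs (perp P)) S0.

Definition while_unroll (R : realType) (V : finType) t (qs : t.-tuple V) (P : lmat R t)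
    (B : prog R V) (i : nat) : prog R V :=
  Seq (prog_pow (Seq (Assert qs P) B) i) (Assert qs (perp P)).

Lemma wf_assert_perp (R : realType) (V : finType) t (qs : t.-tuple V) (P : lmat R t) :
  wf_prog (Assert qs P) -> wf_prog (Assert qs (perp P)).
Proof. by move=> [? [? P_proj]]; do 2 split=> //; apply: is_proj_perp. Qed.

Lemma wf_if_branch (R : realType) (V : finType) t (qs : t.-tuple V) (P : lmat R t)
    (S1 S0 : prog R V) b :
  wf_prog (If qs P S1 S0) -> wf_prog (if_branch qs P S1 S0 b).
Proof. by case: b => -[? [? [P_proj [? ?]]]]; do 3 split=> //; apply: is_proj_perp. Qed.

Lemma wf_while_unroll (R : realType) (V : finType) t (qs : t.-tuple V) (P : lmat R t)
    (B : prog R V) i :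
  wf_prog (While qs P B) -> wf_prog (while_unroll qs P B i).
Proof.
move=> -[? [? [P_proj ?]]]; split; first exact: wf_prog_pow.
by do 2 split=> //; apply: is_proj_perp.
Qed.

Lemma set2_range (T : Type) (a b : T) : [set a; b] = range (fun k : bool => if k then a else b).
Proof.
by apply/seteqP; split=> [x [->|->] | _ [[] _ <-]]; [exists true | exists false | left | right].
Qed.

Section WellStructuredDomain.
Variables (R : realType) (V : finType) (A : Type) (le : A -> A -> Prop) (sup : set A -> A).
Variables (alpha : set (gmat R V) -> A) (gamma : A -> set (gmat R V)).
Hypothesis WS : well_structured le sup alpha gamma.
Local Notation D := (@is_dens R V).

Lemma leA_refl a : le a a.
Proof. by case: WS => -[]. Qed.

Lemma leA_trans a b c : le a b -> le b c -> le a c.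
Proof. by case: WS => -[_ [trans _]] _; apply: trans. Qed.

Lemma leA_anti a b : le a b -> le b a -> a = b.
Proof. by case: WS => -[_ [_ [anti _]]] _; apply: anti. Qed.

Lemma le_sup (X : set A) a : X a -> le a (sup X).
Proof. by case: WS => -[_ [_ [_ [ub _]]]] _; apply: ub. Qed.

Lemma sup_le (X : set A) b : (forall a, X a -> le a b) -> le (sup X) b.
Proof. by case: WS => -[_ [_ [_ [_ lub]]]] _; apply: lub. Qed.

Lemma alpha_set1_le (c : set (gmat R V)) x : c `<=` D -> c x -> le (alpha [set x]) (alpha c).
Proof. by case: WS => _ [alpha_mono _] cD cx; apply: alpha_mono => // y ->. Qed.

Lemma sup_range_le (J : Type) (f g : J -> A) :
  (forall i, le (f i) (g i)) -> le (sup (range f)) (sup (range g)).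
Proof.
move=> fg; apply: sup_le => _ [i _ <-]; apply: leA_trans (fg i) _.
by apply: le_sup; exists i.
Qed.

(* the Galois connection makes [alpha c] the join of the [alpha [set x]], [x] in [c] *)
Lemma alpha_le_set1 (c : set (gmat R V)) a :
  c `<=` D -> (forall x, c x -> le (alpha [set x]) a) -> le (alpha c) a.
Proof.
case: WS => _ [_ [_ [gamma_mono [galois _]]]] cD x_le; apply/galois => // x cx.
have x_gamma : [set x] `<=` gamma (alpha [set x]).
  by apply/galois; [move=> y ->; apply: cD | apply: leA_refl].
exact/(gamma_mono _ _ (x_le x cx))/x_gamma.
Qed.

Lemma alpha_image_sup (J : Type) (F : gmat R V -> gmat R V) (G : J -> gmat R V -> gmat R V)
    (c : set (gmat R V)) :
  c `<=` D -> (forall x, D x -> D (F x)) -> (forall i x, D x -> D (G i x)) ->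
  (forall x, D x -> alpha [set F x] = sup (range (fun i => alpha [set G i x]))) ->
  alpha (F @` c) = sup (range (fun i => alpha (G i @` c))).
Proof.
move=> cD FD GD FG; have img_D H : (forall x, D x -> D (H x)) -> H @` c `<=` D.
  by move=> HD; apply/image_subP => x /cD /HD.
apply: leA_anti.
- apply: alpha_le_set1 (img_D _ FD) _ => _ [x cx <-]; rewrite FG; last exact: cD.
  apply: sup_le => _ [i _ <-]; apply: leA_trans _ (le_sup _); last by exists i.
  by apply: alpha_set1_le (img_D _ (GD i)) _; exists x.
- apply: sup_le => _ [i _ <-]; apply: alpha_le_set1 (img_D _ (GD i)) _ => _ [x cx <-].
  apply: leA_trans _ (alpha_set1_le (img_D _ FD) _); last by exists x.
  by rewrite FG; [apply: le_sup; exists i | exact: cD].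
Qed.

Lemma alpha_set1_sem_if t (qs : t.-tuple V) (P : lmat R t) (S1 S0 : prog R V) X :
  wf_prog (If qs P S1 S0) -> D X ->
  alpha [set sem (If qs P S1 S0) X] =
    sup (range (fun b => alpha [set sem (if_branch qs P S1 S0 b) X])).
Proof.
move=> W XD; have [_ [_ [_ [_ [_ [_ [sup_fin _]]]]]]] := WS.
have sum_branches : \sum_(b : bool) (1 : R)%:C *: sem (if_branch qs P S1 S0 b) X =
    sem (If qs P S1 S0) X by rewrite big_bool /= !scale1r.
rewrite -sum_branches sup_fin ?card_bool ?sum_branches //.
- by move=> b; apply: is_dens_sem XD; apply: wf_if_branch.
- exact: is_dens_sem.
Qed.

Lemma alpha_set1_sem_while t (qs : t.-tuple V) (P : lmat R t) (B : prog R V) X :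
  wf_prog (While qs P B) -> D X ->
  alpha [set sem (While qs P B) X] =
    sup (range (fun i => alpha [set sem (while_unroll qs P B i) X])).
Proof.
move=> W XD; have [_ [_ [_ [_ [_ [_ [_ sup_inf]]]]]]] := WS.
have [_ [qs_uniq [P_proj WB]]] := W.
apply: (sup_inf _ (fun=> 1)) => //.
- by move=> i; apply: is_dens_sem XD; apply: wf_while_unroll.
- have [W_cvg _] := sem_while_cvg qs_uniq P_proj (sem_trace_nonincreasing_positive WB) XD.1.
  suff -> : (fun n => \sum_(i < n) (1 : R)%:C *: sem (while_unroll qs P B i) X) =
    (fun n => \sum_(i < n) sem_assert qs (perp P) (iter i (sem (Seq (Assert qs P) B)) X)) by [].
  by apply/funext => n; apply: eq_bigr => i _; rewrite scale1r /= sem_prog_pow.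
- exact: is_dens_sem.
Qed.

End WellStructuredDomain.

Section RelationalAbstraction.
Variables (R : realType) (V : finType) (A : Type) (le : A -> A -> Prop) (sup : set A -> A).
Variables (alpha : set (gmat R V) -> A) (gamma : A -> set (gmat R V)).
Variable absb : prog R V -> A -> A.
Hypothesis WS : well_structured le sup alpha gamma.
Local Notation D := (@is_dens R V).
Local Notation asem := (asem sup absb).

(* [r] is [le] for soundness and [eq] for completeness *)
Variable r : A -> A -> Prop.
Hypothesis r_trans : forall a b c, r a b -> r b c -> r a c.
Hypothesis r_sup : forall (J : Type) (f g : J -> A),
  (forall i, r (f i) (g i)) -> r (sup (range f)) (sup (range g)).
Hypothesis absb_r :
  forall e, is_basic e -> wf_prog e -> forall a b, r a b -> r (absb e a) (absb e b).

Definition rel_abs (f : gmat R V -> gmat R V) (fs : A -> A) :=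
  forall c, c `<=` D -> r (alpha (f @` c)) (fs (alpha c)).

Hypothesis absb_rel_abs : forall e, is_basic e -> wf_prog e -> rel_abs (sem e) (absb e).

Lemma apow_rel (sk f : A -> A) i a b :
  (forall a b, r a b -> r (sk a) (sk b)) -> (forall a b, r a b -> r (f a) (f b)) ->
  r a b -> r (apow sk f i a) (apow sk f i b).
Proof.
move=> sk_r f_r; elim: i a b => [|[|i] IH] a b ab /=; [exact: sk_r | exact: f_r | ].
exact/f_r/IH.
Qed.

Lemma asem_rel (S : prog R V) a b : wf_prog S -> r a b -> r (asem S a) (asem S b).
Proof.
elim: S a b => [|t qs|t qs U|t qs P|S0 IH0 S1 IH1|t qs P S1 IH1 S0 IH0|t qs P B IHB] a b W ab;
  try exact: absb_r.
- by apply: IH1 (proj2 W) _; apply: IH0 (proj1 W) _.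
- rewrite /= !set2_range; apply: r_sup => -[].
  + by have [WA W1] := wf_if_branch true W; apply: IH1 W1 _; apply: absb_r.
  + by have [WA W0] := wf_if_branch false W; apply: IH0 W0 _; apply: absb_r.
- have [t_gt0 [qs_uniq [P_proj WB]]] := W.
  have WA : wf_prog (Assert qs P) by [].
  rewrite /=; apply: r_sup => i; apply: absb_r; [by [] | exact: wf_assert_perp |].
  apply: apow_rel ab => [x y|x y xy]; first exact: absb_r.
  by apply: IHB WB _; apply: absb_r.
Qed.

Lemma rel_abs_assert t (qs : t.-tuple V) (P : lmat R t) :
  wf_prog (Assert qs P) -> rel_abs (sem (Assert qs P)) (asem (Assert qs P)).
Proof. exact: absb_rel_abs. Qed.

Lemma rel_abs_seq (S0 S1 : prog R V) : wf_prog S0 -> wf_prog S1 ->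
  rel_abs (sem S0) (asem S0) -> rel_abs (sem S1) (asem S1) ->
  rel_abs (sem (Seq S0 S1)) (asem (Seq S0 S1)).
Proof.
move=> W0 W1 abs0 abs1 c cD.
rewrite [_ @` c](_ : _ = sem S1 @` (sem S0 @` c)); last by rewrite image_comp.
apply: r_trans _ _ _ (abs1 _ _) (asem_rel W1 (abs0 _ cD)).
by apply/image_subP => x /cD; apply: is_dens_sem.
Qed.

Lemma rel_abs_pow (S : prog R V) i : wf_prog S -> rel_abs (sem S) (asem S) ->
  rel_abs (sem (prog_pow S i)) (asem (prog_pow S i)).
Proof.
move=> W absS; elim: i => [|[|i] IH] //; first exact: absb_rel_abs.
exact: rel_abs_seq (wf_prog_pow _ W) W IH absS.
Qed.

Lemma rel_abs_if t (qs : t.-tuple V) (P : lmat R t) (S1 S0 : prog R V) :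
  wf_prog (If qs P S1 S0) -> rel_abs (sem S1) (asem S1) -> rel_abs (sem S0) (asem S0) ->
  rel_abs (sem (If qs P S1 S0)) (asem (If qs P S1 S0)).
Proof.
move=> W abs1 abs0 c cD; have [t_gt0 [qs_uniq [P_proj [W1 W0]]]] := W.
have WA : wf_prog (Assert qs P) by [].
have WAp := wf_assert_perp WA.
rewrite (alpha_image_sup WS (G := fun b => sem (if_branch qs P S1 S0 b))) //.
- rewrite /= set2_range; apply: r_sup => -[].
  + exact: (rel_abs_seq WA W1 (rel_abs_assert WA) abs1 cD).
  + exact: (rel_abs_seq WAp W0 (rel_abs_assert WAp) abs0 cD).
- by move=> X; apply: is_dens_sem.
- by move=> b X XD; apply: is_dens_sem XD; apply: wf_if_branch.
- by move=> X XD; rewrite (alpha_set1_sem_if WS W XD).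
Qed.

Lemma rel_abs_while t (qs : t.-tuple V) (P : lmat R t) (B : prog R V) :
  wf_prog (While qs P B) -> rel_abs (sem B) (asem B) ->
  rel_abs (sem (While qs P B)) (asem (While qs P B)).
Proof.
move=> W absB c cD; have [t_gt0 [qs_uniq [P_proj WB]]] := W.
have WA : wf_prog (Assert qs P) by [].
have WAp := wf_assert_perp WA.
have Wbody : wf_prog (Seq (Assert qs P) B) by [].
have abs_body := rel_abs_pow _ Wbody (rel_abs_seq WA WB (rel_abs_assert WA) absB).
rewrite (alpha_image_sup WS (G := fun i => sem (while_unroll qs P B i))) //.
- rewrite /=; apply: r_sup => i.
  have := rel_abs_seq (wf_prog_pow i Wbody) WAp (abs_body i) (rel_abs_assert WAp) cD.
  by rewrite /= asem_prog_pow.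
- by move=> X; apply: is_dens_sem.
- by move=> i X XD; apply: is_dens_sem XD; apply: wf_while_unroll.
- by move=> X XD; rewrite (alpha_set1_sem_while WS W XD).
Qed.

Lemma rel_abs_sem (S : prog R V) : wf_prog S -> rel_abs (sem S) (asem S).
Proof.
elim: S => [|t qs|t qs U|t qs P|S0 IH0 S1 IH1|t qs P S1 IH1 S0 IH0|t qs P B IHB] W;
  try exact: absb_rel_abs.
- by case: W => W0 W1; apply: rel_abs_seq W0 W1 (IH0 W0) (IH1 W1).
- by case: (W) => _ [_ [_ [W1 W0]]]; apply: rel_abs_if W (IH1 W1) (IH0 W0).
- by case: (W) => _ [_ [_ WB]]; apply: rel_abs_while W (IHB WB).
Qed.

End RelationalAbstraction.

Theorem mainTheorem5 (R : realType) (V : finType) (A : Type)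
  (le : A -> A -> Prop) (sup : set A -> A)
  (alpha : set (gmat R V) -> A) (gamma : A -> set (gmat R V))
  (absb : prog R V -> A -> A) :
  well_structured le sup alpha gamma ->
  (forall e : prog R V, is_basic e -> wf_prog e -> monotone_op le (absb e)) ->
  ((forall e : prog R V, is_basic e -> wf_prog e ->
      sound_abs le alpha (sem e) (absb e)) ->
   forall S : prog R V, wf_prog S ->
      sound_abs le alpha (sem S) (asem sup absb S)) /\
  ((forall e : prog R V, is_basic e -> wf_prog e ->
      complete_abs alpha (sem e) (absb e)) ->
   forall S : prog R V, wf_prog S ->
      complete_abs alpha (sem S) (asem sup absb S)).
Proof.
move=> WS absb_mono; split=> [absb_sound | absb_complete] S W.
- exact: (rel_abs_sem WS (leA_trans WS) (sup_range_le WS) absb_mono absb_sound W).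
- apply: (rel_abs_sem WS (r := eq) _ _ _ absb_complete W).
  + by move=> a b c -> ->.
  + by move=> J f g /funext ->.
  + by move=> e _ _ a b ->.
Qed.
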